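(* Let $Z\in\{0,1\}^{n\times k}$ have exactly one $1$ in each row and at least one $1$ in each column, let $B\in[0,1]^{k\times k}$ be symmetric and full rank, and let $\mathscr{W}=ZBZ^T$. Let $\mathscr{D}$ be the diagonal matrix with $\mathscr{D}_{ii}=\sum_k\mathscr{W}_{ik}$ and $\mathscr{L}=\mathscr{D}^{-1/2}\mathscr{W}\mathscr{D}^{-1/2}$. Then there exists a matrix $\mu\in\mathbb{R}^{k\times k}$ such that the columns of $Z\mu$ are the eigenvectors of $\mathscr{L}$ corresponding to the nonzero eigenvalues of $\mathscr{L}$. Further, for all $i,j$, \[ z_i\mu=z_j\mu\iff z_i=z_j, \] where $z_i$ denotes the $i$th row of $Z$.
   Context: This is the population version of the Stochastic Blockmodel with $k$ blocks: $Z_{ig}=1$ means node $i$ belongs to block $g$, and $B$ contains the within- and between-block edge probabilities. *)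

From HB Require Import structures.
From mathcomp Require Import all_boot all_order all_algebra.
Set Implicit Arguments. Unset Strict Implicit. Unset Printing Implicit Defensive.
Import Order.TTheory GRing.Theory Num.Theory.
Local Open Scope ring_scope.

Definition sbmW (R : rcfType) (n k : nat) (Z : 'M[R]_(n, k)) (B : 'M[R]_k)
  : 'M[R]_n := Z *m B *m Z^T.

Definition sbm_deg (R : rcfType) (n : nat) (W : 'M[R]_n) (i : 'I_n) : R :=
  \sum_(j < n) W i j.

Definition sbm_Dmhalf (R : rcfType) (n : nat) (W : 'M[R]_n) : 'M[R]_n :=
  diag_mx (\row_i (Num.sqrt (sbm_deg W i))^-1).

Definition sbmL (R : rcfType) (n : nat) (W : 'M[R]_n) : 'M[R]_n :=
  sbm_Dmhalf W *m W *m sbm_Dmhalf W.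

From HB Require Import structures.
From mathcomp Require Import all_boot all_order all_algebra.
From mathcomp Require Import ring lra complex.
Import Order.TTheory GRing.Theory Num.Theory.
Local Open Scope ring_scope.

Set Implicit Arguments. Unset Strict Implicit. Unset Printing Implicit Defensive.

(* Degrees are constant on blocks, so [D^-1/2 Z = Z T] with [T] the diagonal
   of inverse square roots of the block degrees, and [L = Z T B T Z^T].  With
   [Q] the diagonal of square roots of the block sizes ([Q^2 = Z^T Z]),
   [Y = Z Q^-1] has orthonormal columns and [L = Y M Y^T] for the symmetric
   invertible matrix [M = Q T B T Q].  Diagonalising [M = U^T E U] with [U]
   orthogonal, the columns of [X = Y U^T = Z (Q^-1 U^T)] are orthonormal
   eigenvectors of [L] for the nonzero eigenvalues [E], and they span the
   range of [L].  As [Q^-1 U^T] is invertible, two rows of [X] agree exactly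
   when the corresponding rows of [Z] do. *)

Section FieldMatrices.
Variable R : fieldType.

Lemma row_unitmx_neq0 n (A : 'M[R]_n) i : A \in unitmx -> row i A != 0.
Proof.
move=> Au; apply/eqP => Ai0; have := congr1 (mulmx^~ (invmx A)) Ai0.
rewrite -row_mul mulmxV // mul0mx => /rowP /(_ i); rewrite !mxE eqxx /=.
by move/eqP; rewrite oner_eq0.
Qed.

Lemma unitmx_diag n (d : 'rV[R]_n) : (diag_mx d \in unitmx) = [forall j, d 0 j != 0].
Proof.
by rewrite unitmxE det_diag unitfE; apply/prodf_neq0/forallP => [dn0 j|dn0 j _];
  exact: dn0.
Qed.

Lemma eigenvector_trmx_sub m n (L : 'M[R]_m) (X : 'M_(m, n)) C (v : 'cV_m) a :
  L = X *m C -> a != 0 -> L *m v = a *: v -> (v^T <= X^T)%MS.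
Proof.
move=> LE an0 Lv.
have -> : v = X *m (a^-1 *: (C *m v)).
  by rewrite -scalemxAr mulmxA -LE Lv scalerA mulVf // scale1r.
by rewrite trmx_mul submxMl.
Qed.

End FieldMatrices.

Lemma row_mul_unitmx (R : comUnitRingType) m n (A : 'M[R]_(m, n)) (mu : 'M_n) i j :
  mu \in unitmx -> row i (A *m mu) = row j (A *m mu) <-> row i A = row j A.
Proof.
move=> muu; rewrite !row_mul; split=> [|-> //].
by move/(congr1 (mulmx^~ (invmx mu))); rewrite !mulmxK.
Qed.

Lemma orthonormal_conj_eigen (R : comUnitRingType) n k (Y : 'M[R]_(n, k))
    (M U : 'M_k) (e : 'rV_k) :
  Y^T *m Y = 1%:M -> U *m U^T = 1%:M -> U *m M *m U^T = diag_mx e ->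
  (Y *m U^T)^T *m (Y *m U^T) = 1%:M /\
  (Y *m M *m Y^T) *m (Y *m U^T) = Y *m U^T *m diag_mx e.
Proof.
move=> YY UU De; have UtU : U^T *m U = 1%:M by apply: mulmx1C.
split.
  by rewrite trmx_mul trmxK mulmxA -(mulmxA _ Y^T) YY mulmx1 UU.
by rewrite -De !mulmxA -(mulmxA _ Y^T) YY mulmx1 -(mulmxA Y U^T) UtU mulmx1.
Qed.

Lemma rV_neq0_entry (V : nmodType) n (v : 'rV[V]_n) : v != 0 -> exists j, v 0 j != 0.
Proof.
move=> vn0; apply/existsP; apply: contraR vn0; rewrite negb_exists => /forallP v0.
by apply/eqP/rowP => j; rewrite mxE; apply/eqP; rewrite -[_ == _]negbK v0.
Qed.

Lemma mulmx_col_gt0 (R : numDomainType) m n (A : 'M[R]_(m, n)) (v : 'cV[R]_n) i :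
  (forall j, 0 <= A i j) -> row i A != 0 -> (forall j, 0 < v j 0) ->
  0 < (A *m v) i 0.
Proof.
move=> A_ge0 /rV_neq0_entry [j]; rewrite mxE => Aij v_gt0.
rewrite mxE (bigD1 j) //= ltr_pwDl //.
  by rewrite mulr_gt0 // lt_def Aij A_ge0.
by apply: sumr_ge0 => j' _; rewrite mulr_ge0 // ltW.
Qed.

Lemma mulmx_trmx_row_gt0 (R : realDomainType) n (v : 'rV[R]_n) :
  v != 0 -> 0 < (v *m v^T) 0 0.
Proof.
move=> /rV_neq0_entry [j vj]; rewrite mxE (bigD1 j) //= ltr_pwDl //.
  by rewrite !mxE -expr2 lt_def sqrf_eq0 vj sqr_ge0.
by apply: sumr_ge0 => i _; rewrite !mxE -expr2 sqr_ge0.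
Qed.

Section RealSpectral.
Variable R : rcfType.

(* A real symmetric matrix is complex Hermitian, and the eigenvalues of a
   Hermitian matrix are real. *)
Lemma symmetric_real_eigenvalue n (A : 'M[R]_n.+1) :
  A^T = A -> exists a, eigenvalue A a.
Proof.
move=> Asym.
pose f := real_complex R; pose Ac := map_mx f A.
have Ac_sym : Ac \is symmetricmx.
  rewrite is_hermitianmxE expr0 scale1r; apply/eqP/matrixP => x y.
  by rewrite !mxE -{1}Asym mxE.
have Ac_real : Ac \is a realmx.
  by apply/mxOverP => x y; rewrite mxE; apply/complex_realP; eexists.
have Ac_herm := realsym_hermsym Ac_sym Ac_real.
have d_real := hermitian_spectral_diag_real Ac_herm.
have /orthomx_spectralP AcE := hermitian_normalmx Ac_herm.
set P := spectralmx Ac in AcE; set d := spectral_diag Ac in AcE d_real.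
have Pu : P \in unitmx by apply: spectral_unit.
have PAc : P *m Ac = diag_mx d *m P by rewrite {1}AcE !mulmxA mulmxV // mul1mx.
have ev : eigenvalue Ac (d 0 0).
  apply/eigenvalueP; exists (row 0 P); last exact: row_unitmx_neq0.
  by rewrite -row_mul PAc row_mul row_diag_mx -scalemxAl rowE.
exists (complex.Re (d 0 0)); move: ev; rewrite eigenvalue_root_char.
have -> : d 0 0 = f (complex.Re (d 0 0)).
  by rewrite /f RRe_real //; apply: (mxOverP d_real).
by rewrite -map_char_poly fmorph_root eigenvalue_root_char.
Qed.

Lemma eigenvalue_unit_eigenvector n (A : 'M[R]_n) a : eigenvalue A a ->
  exists u : 'rV_n, u *m u^T = 1%:M /\ u *m A = a *: u.
Proof.
move/eigenvalueP => [v vA vn0].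
have s_gt0 := mulmx_trmx_row_gt0 vn0; set s := (v *m v^T) 0 0 in s_gt0.
exists ((Num.sqrt s)^-1 *: v); split; last by rewrite -scalemxAl vA !scalerA mulrC.
rewrite linearZ /= -scalemxAl -scalemxAr scalerA.
apply/matrixP => x y; rewrite !ord1 mxE [in RHS]mxE /= -/s -expr2 exprVn.
by rewrite sqr_sqrtr ?ltW // mulVf // gt_eqF.
Qed.

(* The reflection [1 - 2 w^T w / (w w^T)] through the hyperplane orthogonal
   to [w = u - e_0] swaps [e_0] and the unit vector [u]. *)
Lemma householder_reflection n (u : 'rV[R]_n.+1) : u *m u^T = 1%:M ->
  exists H : 'M_n.+1, [/\ H^T = H, H *m H = 1%:M & row 0 H = u].
Proof.
move=> uu; pose e : 'rV[R]_n.+1 := delta_mx 0 0.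
have [->|ue] := eqVneq u e; first by exists 1%:M; rewrite trmx1 mulmx1 rowE mulmx1.
pose w := u - e; pose c := (w *m w^T) 0 0.
have c_neq0 : c != 0 by rewrite gt_eqF // mulmx_trmx_row_gt0 // subr_eq0.
have ww : w *m w^T = c%:M by rewrite [LHS]mx11_scalar.
have ewT : e *m w^T = (u 0 0 - 1)%:M.
  by rewrite [LHS]mx11_scalar -rowE /w /e !mxE eqxx.
have cE : c = 2 * (1 - u 0 0).
  have eeT : e *m e^T = 1%:M by rewrite [LHS]mx11_scalar -rowE !mxE eqxx.
  have ueT : u *m e^T = (u 0 0)%:M.
    by rewrite [LHS]mx11_scalar trmx_delta -colE mxE.
  have euT : e *m u^T = (u 0 0)%:M by rewrite -[LHS]trmxK trmx_mul trmxK ueT tr_scalar_mx.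
  rewrite /c /w raddfB /= mulmxBl !mulmxBr uu eeT ueT euT !mxE eqxx /=; lra.
exists (1%:M - (2 / c) *: (w^T *m w)); split.
- by rewrite linearD /= trmx1 linearN linearZ /= trmx_mul trmxK.
- clearbody w c; have WW : (w^T *m w) *m (w^T *m w) = c *: (w^T *m w).
    by rewrite mulmxA -(mulmxA w^T) ww mul_mx_scalar -scalemxAl.
  rewrite mulmxBl !mulmxBr !mul1mx !mulmx1 -scalemxAr -scalemxAl WW !scalerA.
  have -> : 2 / c * (2 / c) * c = 2 / c + 2 / c by field.
  by rewrite scalerDl opprB addrK subrK.
- rewrite rowE -/e mulmxBr mulmx1 -scalemxAr mulmxA ewT mul_scalar_mx scalerA.
  have -> : 2 / c * (u 0 0 - 1) = -1.
    have u00 : 1 - u 0 0 != 0.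
      by move: c_neq0; rewrite cE mulf_eq0 negb_or => /andP[].
    by rewrite cE; field.
  by rewrite scaleN1r opprK /w addrC subrK.
Qed.

Lemma orthogonal_diagonalization n (A : 'M[R]_n) : A^T = A ->
  exists U : 'M_n, U *m U^T = 1%:M /\ is_diag_mx (U *m A *m U^T).
Proof.
elim: n A => [|n IH] A Asym.
  by exists 1%:M; split; [rewrite trmx1 mulmx1 | apply/is_diag_mxP => [[]]].
have [a /eigenvalue_unit_eigenvector [u [uu uA]]] := symmetric_real_eigenvalue Asym.
have [H [Hsym HH H0]] := householder_reflection uu.
pose C : 'M_(1 + n) := H *m A *m H.
have Csym : C^T = C by rewrite /C !trmx_mul Hsym Asym mulmxA.
have C0 : forall j, C 0 j = a * (j == 0)%:R.
  move=> j; have : row 0 C = a *: row 0 (1%:M : 'M_n.+1).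
    by rewrite /C !row_mul H0 uA -scalemxAl -H0 -row_mul HH.
  by move/rowP/(_ j); rewrite !mxE eq_sym.
have CE : C = H *m A *m H by [].
clearbody C.
have l0 : lshift n (0 : 'I_1) = 0 by apply/val_inj.
have Cur : ursubmx C = 0.
  by apply/matrixP => i j; rewrite !mxE ord1 l0 C0 mulr0.
have Cdl : dlsubmx C = 0.
  by apply/matrixP => i j; rewrite !mxE ord1 l0 -Csym mxE C0 mulr0.
have [U' [UU' DU']] := IH (drsubmx C) ltac:(by rewrite trmx_drsub Csym).
pose V : 'M_(1 + n) := block_mx 1%:M 0 0 U'.
have VV : V *m V^T = 1%:M.
  rewrite tr_block_mx !trmx0 trmx1 mulmx_block.
  by rewrite !mulmx0 !mul0mx !mulmx1 !addr0 !add0r UU' -scalar_mx_block.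
exists (V *m H); split.
  by rewrite trmx_mul Hsym mulmxA -(mulmxA V) HH mulmx1.
have -> : V *m H *m A *m (V *m H)^T = V *m C *m V^T.
  by rewrite trmx_mul Hsym CE !mulmxA.
rewrite -[C]submxK Cur Cdl tr_block_mx !trmx0 trmx1 !mulmx_block.
rewrite !(mulmx0, mul0mx, mulmx1, mul1mx, addr0, add0r).
by rewrite (@is_diag_block_mx _ 1 n 1 n) // !eqxx mx11_is_diag DU'.
Qed.

End RealSpectral.

Section PopulationSBM.
Variables (R : rcfType) (n k : nat) (Z : 'M[R]_(n, k)) (B : 'M[R]_k).
Hypothesis Z01 : forall i j, Z i j = 0 \/ Z i j = 1.
Hypothesis Zrow : forall i : 'I_n, exists! j : 'I_k, Z i j = 1.
Hypothesis Zcol : forall j : 'I_k, exists i : 'I_n, Z i j = 1.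
Hypothesis B_ge0 : forall g h, 0 <= B g h.
Hypothesis Bsym : B^T = B.
Hypothesis B_unit : B \in unitmx.

Lemma row_membership i : exists g, row i Z = delta_mx 0 g.
Proof.
have [g [Zig Zi_uniq]] := Zrow i; exists g; apply/rowP => j; rewrite !mxE.
have [->|jg] := eqVneq j g; first by rewrite Zig eqxx.
rewrite andbF; case: (Z01 i j) => // Zij.
by move: (Zi_uniq _ Zij) => /eqP; rewrite eq_sym (negbTE jg).
Qed.

Lemma membership_entryE i (g x : 'I_k) : row i Z = delta_mx 0 g -> Z i x = (x == g)%:R.
Proof. by move/rowP/(_ x); rewrite !mxE. Qed.

Lemma membership_ge0 i j : 0 <= Z i j.
Proof. by case: (Z01 i j) => ->; rewrite ?ler01. Qed.

Lemma membership_mulmxE i g m (A : 'M[R]_(k, m)) j :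
  row i Z = delta_mx 0 g -> (Z *m A) i j = A g j.
Proof.
move=> Zi; have /rowP/(_ j) : row i (Z *m A) = row g A by rewrite row_mul Zi -rowE.
by rewrite !mxE.
Qed.

Definition block_sizes : 'cV[R]_k := Z^T *m const_mx 1.
Definition block_degrees : 'cV[R]_k := B *m block_sizes.
Let Q := diag_mx (\row_g Num.sqrt (block_sizes g 0)).
Let T := diag_mx (\row_g (Num.sqrt (block_degrees g 0))^-1).

Lemma block_size_gt0 g : 0 < block_sizes g 0.
Proof.
apply: mulmx_col_gt0 => [j||j]; rewrite ?mxE ?membership_ge0 ?ltr01 //.
have [i Zig] := Zcol g; apply/eqP => /rowP/(_ i); rewrite !mxE Zig.
by apply/eqP; rewrite oner_eq0.
Qed.

Lemma block_degree_gt0 g : 0 < block_degrees g 0.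
Proof. by apply: mulmx_col_gt0; [|exact: row_unitmx_neq0|exact: block_size_gt0]. Qed.

Lemma trmx_membership_mul : Z^T *m Z = diag_mx block_sizes^T.
Proof.
apply/matrixP => g h; rewrite !mxE -sumrMnl; apply: eq_bigr => i _.
have [g' Zi] := row_membership i.
rewrite !mxE !(membership_entryE _ Zi) mulr1.
have [->|_] := eqVneq g g'; last by rewrite mul0r mul0rn.
by rewrite mul1r eq_sym.
Qed.

Lemma diag_sqrt_block_sizes_sqr : Q *m Q = diag_mx block_sizes^T.
Proof.
rewrite mulmx_diag; congr diag_mx; apply/rowP => g.
have := ltW (block_size_gt0 g); rewrite !mxE => s_ge0.
by rewrite -expr2 sqr_sqrtr.
Qed.

Lemma sbm_deg_membership i : sbm_deg (sbmW Z B) i = (Z *m block_degrees) i 0.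
Proof.
rewrite /sbm_deg /block_degrees /block_sizes /sbmW !mulmxA [RHS]mxE.
by apply: eq_bigr => j _; rewrite [const_mx 1 j 0]mxE mulr1.
Qed.

Lemma sbm_Dmhalf_membership : sbm_Dmhalf (sbmW Z B) *m Z = Z *m T.
Proof.
apply/matrixP => i j; rewrite mul_diag_mx mul_mx_diag !mxE sbm_deg_membership.
have [g Zi] := row_membership i; rewrite (membership_mulmxE _ _ Zi).
rewrite (membership_entryE _ Zi).
have [<-|_] := eqVneq g j; last by rewrite mulr0 mul0r.
by rewrite mulr1 mul1r [block_degrees _ _]mxE.
Qed.

Lemma sbmL_membership : sbmL (sbmW Z B) = Z *m T *m B *m T *m Z^T.
Proof.
have ZtD : Z^T *m sbm_Dmhalf (sbmW Z B) = T *m Z^T.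
  rewrite -[sbm_Dmhalf _]trmxK -trmx_mul /sbm_Dmhalf tr_diag_mx.
  by rewrite sbm_Dmhalf_membership trmx_mul tr_diag_mx.
by rewrite /sbmL {2}/sbmW !mulmxA sbm_Dmhalf_membership -!mulmxA ZtD.
Qed.

Lemma sbmL_normalized_factorization :
  exists N M : 'M[R]_k, [/\ N \in unitmx, M \in unitmx, M^T = M,
    (Z *m N)^T *m (Z *m N) = 1%:M
  & sbmL (sbmW Z B) = Z *m N *m M *m (Z *m N)^T].
Proof.
have Q_unit : Q \in unitmx.
  by rewrite unitmx_diag; apply/forallP => g; rewrite mxE gt_eqF ?sqrtr_gt0 ?block_size_gt0.
have T_unit : T \in unitmx.
  rewrite unitmx_diag; apply/forallP => g.
  by rewrite mxE invr_eq0 gt_eqF ?sqrtr_gt0 ?block_degree_gt0.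
have Qsym : Q^T = Q by rewrite tr_diag_mx.
exists (invmx Q), (Q *m T *m B *m T *m Q); split.
- by rewrite unitmx_inv.
- by rewrite !unitmx_mul Q_unit T_unit B_unit.
- by rewrite !trmx_mul Qsym !tr_diag_mx Bsym !mulmxA.
- rewrite trmx_mul trmx_inv Qsym mulmxA -(mulmxA _ Z^T) trmx_membership_mul
  -diag_sqrt_block_sizes_sqr.
  by rewrite mulmxA mulmxK // mulVmx.
- by rewrite sbmL_membership trmx_mul trmx_inv Qsym !mulmxA mulmxKV // mulmxK.
Qed.

End PopulationSBM.

Theorem lemma3p1 (R : rcfType) (n k : nat) (Z : 'M[R]_(n, k)) (B : 'M[R]_k)
  (hZ01 : forall i j, Z i j = 0 \/ Z i j = 1)
  (hZrow : forall i : 'I_n, exists! j : 'I_k, Z i j = 1)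
  (hZcol : forall j : 'I_k, exists i : 'I_n, Z i j = 1)
  (hB01 : forall g h, 0 <= B g h <= 1)
  (hBsym : B^T = B)
  (hBrank : \rank B = k) :
  let L := sbmL (sbmW Z B) in
  exists mu : 'M[R]_k,
    let X := Z *m mu in
    [/\ X^T *m X = 1%:M,
        exists lam : 'rV[R]_k,
          (forall j, lam 0 j != 0) /\ L *m X = X *m diag_mx lam,
        forall (v : 'cV[R]_n) (a : R), a != 0 -> L *m v = a *: v ->
          (v^T <= X^T)%MS
      & forall i j : 'I_n, row i X = row j X <-> row i Z = row j Z].
Proof.
move=> L.
have B_ge0 g h : 0 <= B g h by case/andP: (hB01 g h).
have B_unit : B \in unitmx by rewrite -row_free_unit /row_free hBrank.
have [N [M [N_unit M_unit Msym YY LE]]] :=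
  sbmL_normalized_factorization hZ01 hZrow hZcol B_ge0 hBsym B_unit.
have [U [UU /diag_mxP [e De]]] := orthogonal_diagonalization Msym.
have U_unit : U \in unitmx by case: (mulmx1_unit UU).
have [XX LX] := orthonormal_conj_eigen YY UU De.
exists (N *m U^T) => X; have XE : X = Z *m N *m U^T by rewrite /X mulmxA.
split.
- by rewrite XE.
- exists e; split; last by rewrite /L LE XE.
  have : diag_mx e \in unitmx by rewrite -De !unitmx_mul U_unit M_unit unitmx_tr.
  by rewrite unitmx_diag => /forallP.
- move=> v a; apply: (eigenvector_trmx_sub (C := U *m M *m (Z *m N)^T)).
  by rewrite /L LE XE !mulmxA -(mulmxA _ U^T) (mulmx1C UU) mulmx1.
- by move=> i j; apply: row_mul_unitmx; rewrite unitmx_mul N_unit unitmx_tr.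
Qed.
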